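(* Let $N\ge1$, $0=\tau_0<\cdots<\tau_N=1$, $\Delta_i=\tau_{i+1}-\tau_i$, $D_2=\sum_i\Delta_i^2$, $0<\omega<1/N$ and $\mathcal W_\omega=\{w\in\mathbb R^N:w_i\ge\omega\ \forall i,\ \sum_iw_i=1\}$. Fix $\varepsilon_a>0$, nonnegative weights $K_\sigma(i,\ell)$ with $\sum_\ell K_\sigma(i,\ell)=1$, numbers $\widehat{\mathcal A}_i\ge0$ and $\mathcal A_i\ge0$. Define $\widehat b_i=\sum_\ell K_\sigma(i,\ell)\sqrt{\widehat{\mathcal A}_\ell+\varepsilon_a}$, $\widehat\phi_i=\widehat b_i^2$, $\widehat w_i=\Delta_i\widehat b_i/\sum_\ell\Delta_\ell\widehat b_\ell$, $b_i^\star=\sum_\ell K_\sigma(i,\ell)\sqrt{\mathcal A_\ell+\varepsilon_a}$, $\phi_i^\star=(b_i^\star)^2$, $\mathcal J(w)=\sum_i\mathcal A_i\Delta_i^2/w_i$, $\mathcal J_{\sigma,\varepsilon_a}(w)=\sum_i\phi_i^\star\Delta_i^2/w_i$, $\beta_{\sigma,\varepsilon_a}=\max_i|\phi_i^\star-\mathcal A_i|$, and let $w^\star\in\arg\min_{w\in\mathcal W_\omega}\mathcal J(w)$. Then for every $w\in\mathcal W_\omega$, $$|\mathcal J_{\sigma,\varepsilon_a}(w)-\mathcal J(w)|\le\frac{D_2}{\omega}\beta_{\sigma,\varepsilon_a}.$$ Consequently, if moreover $\widehat w\in\mathcal W_\omega$, $\zeta\ge0$, and $\max_i|\widehat\phi_i-\phi_i^\star|\le\zeta$,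 then $$\mathcal J(\widehat w)\le\mathcal J(w^\star)+\frac{2D_2}{\omega}\bigl(\zeta+\beta_{\sigma,\varepsilon_a}\bigr).$$ *)

From mathcomp Require Import all_boot all_order all_algebra.
From mathcomp Require Import reals.
Set Implicit Arguments. Unset Strict Implicit. Unset Printing Implicit Defensive.
Import Order.TTheory GRing.Theory Num.Theory.
Local Open Scope ring_scope.

Section Defs.
Variables (R : realType) (N : nat).

Definition is_mesh (tau : nat -> R) : Prop :=
  tau 0%N = 0 /\ tau N = 1 /\ (forall i : nat, (i < N)%N -> tau i < tau i.+1).

Definition Delta (tau : nat -> R) (i : 'I_N) : R := tau i.+1 - tau i.

Definition D2 (tau : nat -> R) : R := \sum_(i < N) (Delta tau i) ^+ 2.

Definition Wset (omega : R) (w : 'I_N -> R) : Prop :=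
  (forall i, omega <= w i) /\ \sum_(i < N) w i = 1.

Definition bvec (K : 'I_N -> 'I_N -> R) (eps : R) (A : 'I_N -> R) (i : 'I_N) : R :=
  \sum_(l < N) K i l * Num.sqrt (A l + eps).

Definition phivec K eps A i : R := (bvec K eps A i) ^+ 2.

Definition what (tau : nat -> R) K eps (Ahat : 'I_N -> R) (i : 'I_N) : R :=
  Delta tau i * bvec K eps Ahat i / \sum_(l < N) Delta tau l * bvec K eps Ahat l.

Definition Jfun (tau : nat -> R) (a : 'I_N -> R) (w : 'I_N -> R) : R :=
  \sum_(i < N) a i * (Delta tau i) ^+ 2 / w i.

(* max over i of nonnegative quantities (N >= 1) *)
Definition maxI (f : 'I_N -> R) : R := \big[Num.max/0]_(i < N) f i.

End Defs.

From mathcomp Require Import all_boot all_order all_algebra.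
From mathcomp Require Import reals.
From mathcomp Require Import ring lra.
Set Implicit Arguments. Unset Strict Implicit. Unset Printing Implicit Defensive.
Import Order.TTheory GRing.Theory Num.Theory.
Local Open Scope ring_scope.

(* Each term of J_{sigma,eps}(w) - J(w) is (phi*_i - A_i) Delta_i^2 / w_i with
   w_i >= omega.  The weights [what] exactly minimise the functional with
   amplitudes phi-hat over the positive simplex, by Cauchy-Schwarz in the form
   (sum_i x_i)^2 <= sum_i x_i^2 / w_i, with equality for w proportional to
   x_i = Delta_i b-hat_i.  That functional is uniformly within
   D2 / omega * (zeta + beta) of J on W_omega, so its minimiser is within twice
   that distance of the minimum of J. *)

Section WeightedSquares.
Variables (R : realFieldType) (N : nat).
Implicit Types x w : 'I_N -> R.

Lemma sqr_sum_le_sum_sqr_div x w :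
  (forall i, 0 < w i) -> \sum_(i < N) w i = 1 ->
  (\sum_(i < N) x i) ^+ 2 <= \sum_(i < N) x i ^+ 2 / w i.
Proof.
move=> w_gt0 w_sum1; set S := \sum_(i < N) x i.
(* 0 <= (x_i - S w_i)^2 / w_i, with equality at w_i = x_i / S *)
have tangent i : 2 * x i * S - S ^+ 2 * w i <= x i ^+ 2 / w i.
  have w_neq0 : w i != 0 by rewrite gt_eqF.
  rewrite -subr_ge0 (_ : _ - _ = (x i - S * w i) ^+ 2 / w i); last by field.
  by rewrite divr_ge0 ?sqr_ge0 ?ltW.
apply: le_trans (ler_sum _ (fun i _ => tangent i)).
by rewrite sumrB -mulr_suml -!mulr_sumr w_sum1 -/S; lra.
Qed.

Lemma sum_sqr_div_normalized x :
  (forall i, 0 < x i / \sum_(l < N) x l) ->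
  \sum_(i < N) x i ^+ 2 / (x i / \sum_(l < N) x l) = (\sum_(i < N) x i) ^+ 2.
Proof.
set S := \sum_(l < N) x l => xS_gt0.
rewrite expr2 mulr_suml; apply: eq_bigr => i _.
have /[!mulf_eq0] /norP[x_neq0 /[!invr_eq0] S_neq0] : x i / S != 0.
  by rewrite gt_eqF.
by field; apply/andP.
Qed.

End WeightedSquares.

Lemma close_minimizer_le (R : realDomainType) (T : Type) (J J' : T -> R)
    (e : R) (u v : T) :
  `|J' u - J u| <= e -> `|J' v - J v| <= e -> J' u <= J' v ->
  J u <= J v + 2 * e.
Proof. by move=> /ler_normlP[? ?] /ler_normlP[? ?] ?; lra. Qed.

Section Jfun.
Variables (R : realType) (N : nat) (tau : nat -> R).

Lemma Wset_gt0 (omega : R) (w : 'I_N -> R) :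
  0 < omega -> Wset omega w -> forall i, 0 < w i.
Proof. by move=> omega_gt0 [w_ge _] i; apply: lt_le_trans (w_ge i). Qed.

Lemma Jfun_dist_le (omega M : R) (a c w : 'I_N -> R) :
  0 < omega -> (forall i, omega <= w i) -> (forall i, `|a i - c i| <= M) ->
  `|Jfun tau a w - Jfun tau c w| <= D2 N tau / omega * M.
Proof.
move=> omega_gt0 w_ge ac_le.
rewrite /D2 mulr_suml mulr_suml /Jfun -sumrB.
apply: le_trans (ler_norm_sum _ _ _) (ler_sum _ _) => i _.
have w_gt0 : 0 < w i := lt_le_trans omega_gt0 (w_ge i).
have d_ge0 : 0 <= Delta tau i ^+ 2 := sqr_ge0 _.
have q_ge0 : 0 <= Delta tau i ^+ 2 / w i := divr_ge0 d_ge0 (ltW w_gt0).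
rewrite -[a i * _ / _]mulrA -[c i * _ / _]mulrA -mulrBl normrM (ger0_norm q_ge0).
rewrite [_ * M]mulrC ler_pM ?normr_ge0 //.
by rewrite ler_wpM2l ?lef_pV2 ?posrE.
Qed.

Lemma Jfun_phivec (K : 'I_N -> 'I_N -> R) (eps : R) (A w : 'I_N -> R) :
  Jfun tau (phivec K eps A) w
  = \sum_(i < N) (Delta tau i * bvec K eps A i) ^+ 2 / w i.
Proof.
by apply: eq_bigr => i _; rewrite /phivec exprMn [bvec _ _ _ _ ^+ 2 * _]mulrC.
Qed.

Lemma Jfun_phivec_what_le (K : 'I_N -> 'I_N -> R) (eps : R) (A w : 'I_N -> R) :
  (forall i, 0 < what tau K eps A i) ->
  (forall i, 0 < w i) -> \sum_(i < N) w i = 1 ->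
  Jfun tau (phivec K eps A) (what tau K eps A) <= Jfun tau (phivec K eps A) w.
Proof.
move=> what_gt0 w_gt0 w_sum1; rewrite !Jfun_phivec.
rewrite (@sum_sqr_div_normalized _ _ (fun i => Delta tau i * bvec K eps A i)) //.
exact: sqr_sum_le_sum_sqr_div.
Qed.

End Jfun.

Theorem lemma5 (R : realType) (N : nat) (tau : nat -> R) (omega eps : R)
  (K : 'I_N -> 'I_N -> R) (Ahat A : 'I_N -> R) (wstar : 'I_N -> R) :
  (1 <= N)%N ->
  is_mesh N tau ->
  0 < omega -> omega < N%:R^-1 ->
  0 < eps ->
  (forall i l, 0 <= K i l) ->
  (forall i, \sum_(l < N) K i l = 1) ->
  (forall i, 0 <= Ahat i) ->
  (forall i, 0 <= A i) ->
  Wset omega wstar ->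
  (forall w, Wset omega w -> Jfun tau A wstar <= Jfun tau A w) ->
  (forall w, Wset omega w ->
     `| Jfun tau (phivec K eps A) w - Jfun tau A w |
       <= D2 N tau / omega * maxI (fun i => `| phivec K eps A i - A i |))
  /\
  (forall zeta : R,
     Wset omega (what tau K eps Ahat) ->
     0 <= zeta ->
     maxI (fun i => `| phivec K eps Ahat i - phivec K eps A i |) <= zeta ->
     Jfun tau A (what tau K eps Ahat)
       <= Jfun tau A wstar
          + 2 * D2 N tau / omega
            * (zeta + maxI (fun i => `| phivec K eps A i - A i |))).
Proof.
move=> _ _ omega_gt0 _ _ _ _ _ _ Wstar _.
set beta := maxI _; have beta_ge i : `|phivec K eps A i - A i| <= beta.
  exact: le_bigmax.
split=> [w [w_ge _]|zeta What _ zeta_ge]; first exact: Jfun_dist_le.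
have hat_dev i : `|phivec K eps Ahat i - A i| <= zeta + beta.
  rewrite -(subrKA (phivec K eps A i)); apply: le_trans (ler_normD _ _) _.
  by rewrite lerD // (le_trans _ zeta_ge) //; apply: le_bigmax.
have close w : Wset omega w ->
    `|Jfun tau (phivec K eps Ahat) w - Jfun tau A w|
      <= D2 N tau / omega * (zeta + beta).
  by move=> [w_ge _]; apply: Jfun_dist_le.
have [_ wstar_sum1] := Wstar.
have := close_minimizer_le (close _ What) (close _ Wstar)
  (Jfun_phivec_what_le (Wset_gt0 omega_gt0 What) (Wset_gt0 omega_gt0 Wstar)
     wstar_sum1).
by rewrite !mulrA.
Qed.
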